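(* Let $\gamma_2>\gamma_1>0$ and let $k_a\ge 1$ be an integer. Consider two agents, Alice (A) and Bob (B), whose states satisfy for $k=0,\dots,k_a-1$ $$p_X^{(k+1)}=p_X^{(k)}+v_X^{(k)},\qquad X\in\{A,B\},$$ and let $a_{AB}^{(k)}\neq 0$ ($k=0,\dots,k_a-1$) be known weights and $$u_{AB}^{(k)}=\gamma_1a_{AB}^{(k)}\big(p_B^{(k)}-p_A^{(k)}\big)+\gamma_2a_{AB}^{(k)}\big(v_B^{(k)}-v_A^{(k)}\big),\qquad k=0,\dots,k_a-1.$$ Suppose $|p_B^{(k_a)}-p_A^{(k_a)}|\le\delta$ for some $\delta\ge 0$. Set $r=\frac{\gamma_2}{\gamma_2-\gamma_1}$, $$\varphi_k=\frac{1}{\gamma_1-\gamma_2}\Big(\gamma_1p_A^{(k)}+\gamma_2v_A^{(k)}+\frac{u_{AB}^{(k)}}{a_{AB}^{(k)}}\Big),$$ and define the estimates (computable from $p_A^{(k)},v_A^{(k)},u_{AB}^{(k)},a_{AB}^{(k)}$ only) $$\hat p_B^{(0)}=r^{k_a}p_A^{(k_a)}+\sum_{k=0}^{k_a-1}r^{k}\varphi_k,\qquad \hat v_B^{(0)}=-\frac{\gamma_1}{\gamma_2}\hat p_B^{(0)}-\frac{\gamma_2-\gamma_1}{\gamma_2}\varphi_0 .$$ Then the errors $\varepsilon_p=\hat p_B^{(0)}-p_B^{(0)}$ and $\varepsilon_v=\hat v_B^{(0)}-v_B^{(0)}$ satisfy $$|\varepsilon_p|\le\Big(\frac{\gamma_2}{\gamma_2-\gamma_1}\Big)^{k_a}\delta,\qquad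 |\varepsilon_v|\le\frac{\gamma_1\gamma_2^{k_a-1}}{(\gamma_2-\gamma_1)^{k_a}}\delta.$$
   Context: This models a curious agent Alice estimating the initial position and velocity of a neighbor Bob in a network of double-integrator agents $p^{(k+1)}=p^{(k)}+v^{(k)}$, $v^{(k+1)}=v^{(k)}+u^{(k)}$ under the consensus law $u_i^{(k)}=\sum_j\gamma_1a_{ij}^{(k)}(p_j^{(k)}-p_i^{(k)})+\gamma_2a_{ij}^{(k)}(v_j^{(k)}-v_i^{(k)})$; $u_{AB}^{(k)}$ is Bob's contribution to Alice's input, and the coupling weights $a_{AB}^{(k)}$ are public. The condition $|p_B^{(k_a)}-p_A^{(k_a)}|\le\delta$ is called local $\delta$-agreement at time $k_a$. *)

From Stdlib Require Import Reals.
Open Scope R_scope.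

Fixpoint sum_lt (n : nat) (f : nat -> R) : R :=
  match n with
  | O => 0
  | S m => sum_lt m f + f m
  end.

Definition uAB (g1 g2 : R) (a pA pB vA vB : nat -> R) (k : nat) : R :=
  g1 * a k * (pB k - pA k) + g2 * a k * (vB k - vA k).

Definition phi (g1 g2 : R) (a pA vA u : nat -> R) (k : nat) : R :=
  / (g1 - g2) * (g1 * pA k + g2 * vA k + u k / a k).

Definition hat_pB0 (g1 g2 : R) (ka : nat) (a pA vA u : nat -> R) : R :=
  let r := g2 / (g2 - g1) in
  r ^ ka * pA ka + sum_lt ka (fun k => r ^ k * phi g1 g2 a pA vA u k).

Definition hat_vB0 (g1 g2 : R) (ka : nat) (a pA vA u : nat -> R) : R :=
  - (g1 / g2) * hat_pB0 g1 g2 ka a pA vA u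
  - (g2 - g1) / g2 * phi g1 g2 a pA vA u 0%nat.

From Stdlib Require Import Reals Lra Lia.
Open Scope R_scope.

(* Substituting u_AB, the term phi_k equals (g1 p_B(k) + g2 v_B(k)) / (g1 - g2),
   which only involves Bob's state; with
   Bob's dynamics it becomes p_B(k) - r p_B(k+1), r = g2 / (g2 - g1).  The
   weighted sum defining the position estimate therefore telescopes to
   p_B(0) - r^ka p_B(ka), so that eps_p = r^ka (p_A(ka) - p_B(ka)), bounded by
   local agreement; and the velocity estimate is built so that
   eps_v = -(g1/g2) eps_p. *)

Lemma sum_lt_ext (n : nat) (f g : nat -> R) :
  (forall k, (k < n)%nat -> f k = g k) -> sum_lt n f = sum_lt n g.
Proof.
  induction n as [|n IH]; intros Hfg; simpl; [reflexivity|].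
  rewrite IH, Hfg; [reflexivity | lia | intros k Hk; apply Hfg; lia].
Qed.

Lemma sum_lt_telescope (r : R) (x : nat -> R) (n : nat) :
  sum_lt n (fun k => r ^ k * (x k - r * x (S k))) = x 0%nat - r ^ n * x n.
Proof. induction n as [|n IH]; simpl; [|rewrite IH]; ring. Qed.

Lemma phi_uAB (g1 g2 : R) (a pA pB vA vB : nat -> R) (k : nat) :
  g1 <> g2 -> a k <> 0 -> pB (S k) = pB k + vB k ->
  phi g1 g2 a pA vA (uAB g1 g2 a pA pB vA vB) k
    = pB k - g2 / (g2 - g1) * pB (S k).
Proof.
  intros Hg Ha HpB. unfold phi, uAB. rewrite HpB.
  field. repeat split; auto; lra.
Qed.

Lemma hat_pB0_sub (g1 g2 : R) (ka : nat) (a pA pB vA vB : nat -> R) :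
  g1 <> g2 ->
  (forall k, (k < ka)%nat -> a k <> 0) ->
  (forall k, (k < ka)%nat -> pB (S k) = pB k + vB k) ->
  hat_pB0 g1 g2 ka a pA vA (uAB g1 g2 a pA pB vA vB) - pB 0%nat
    = (g2 / (g2 - g1)) ^ ka * (pA ka - pB ka).
Proof.
  intros Hg Ha HpB. unfold hat_pB0.
  rewrite (sum_lt_ext _ _
    (fun k => (g2 / (g2 - g1)) ^ k * (pB k - g2 / (g2 - g1) * pB (S k)))).
  - rewrite sum_lt_telescope. ring.
  - intros k Hk. rewrite phi_uAB; auto.
Qed.

Lemma hat_vB0_sub (g1 g2 : R) (ka : nat) (a pA pB vA vB : nat -> R) :
  0 < g1 < g2 -> a 0%nat <> 0 -> pB 1%nat = pB 0%nat + vB 0%nat ->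
  let u := uAB g1 g2 a pA pB vA vB in
  hat_vB0 g1 g2 ka a pA vA u - vB 0%nat
    = - (g1 / g2) * (hat_pB0 g1 g2 ka a pA vA u - pB 0%nat).
Proof.
  intros Hg Ha HpB u. unfold hat_vB0, u.
  rewrite phi_uAB by (auto; lra). rewrite HpB. field. lra.
Qed.

Lemma Rabs_scale_le (c x d : R) :
  0 <= c -> Rabs x <= d -> Rabs (c * x) <= c * d.
Proof.
  intros Hc Hx. rewrite Rabs_mult, (Rabs_pos_eq c Hc).
  now apply Rmult_le_compat_l.
Qed.

Lemma div_mul_pow_succ_div (a b : R) (n : nat) :
  b <> 0 -> b - a <> 0 ->
  a / b * (b / (b - a)) ^ S n = a * b ^ n / (b - a) ^ S n.
Proof.
  intros Hb Hba. unfold Rdiv. rewrite Rpow_mult_distr, pow_inv. simpl.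
  field. auto using pow_nonzero.
Qed.

Theorem theorem2 (g1 g2 delta : R) (ka : nat)
  (pA pB vA vB a : nat -> R)
  (Hg1 : 0 < g1) (Hg12 : g1 < g2) (Hka : (1 <= ka)%nat)
  (HpA : forall k, (k < ka)%nat -> pA (S k) = pA k + vA k)
  (HpB : forall k, (k < ka)%nat -> pB (S k) = pB k + vB k)
  (Ha : forall k, (k < ka)%nat -> a k <> 0)
  (Hdelta : 0 <= delta)
  (Hagree : Rabs (pB ka - pA ka) <= delta) :
  let u := uAB g1 g2 a pA pB vA vB in
  Rabs (hat_pB0 g1 g2 ka a pA vA u - pB 0%nat)
    <= (g2 / (g2 - g1)) ^ ka * delta /\
  Rabs (hat_vB0 g1 g2 ka a pA vA u - vB 0%nat)
    <= g1 * g2 ^ (ka - 1) / (g2 - g1) ^ ka * delta.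
Proof.
  intros u.
  assert (Hep : Rabs (hat_pB0 g1 g2 ka a pA vA u - pB 0%nat)
                  <= (g2 / (g2 - g1)) ^ ka * delta).
  { unfold u. rewrite hat_pB0_sub by (auto; lra).
    apply Rabs_scale_le.
    - apply pow_le, Rlt_le, Rdiv_lt_0_compat; lra.
    - now rewrite Rabs_minus_sym. }
  split; [exact Hep|].
  unfold u. rewrite hat_vB0_sub by (auto with arith; lra).
  destruct ka as [|m]; [lia|].
  replace (S m - 1)%nat with m by lia.
  rewrite <- div_mul_pow_succ_div, Rmult_assoc by lra.
  rewrite <- Ropp_mult_distr_l, Rabs_Ropp.
  apply Rabs_scale_le; [apply Rlt_le, Rdiv_lt_0_compat; lra | exact Hep].
Qed.
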